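(* Let $n\ge 3$ and let $\preceq$ be an admissible partial order on $\Lambda$. Let $\mathbf{T}(\preceq)$ be the set of all tilings $T$ such that for every 4-element subset $F\subseteq[n]$, the set $T\cap\mathrm{stick}(F)$ is an initial segment of $\mathrm{stick}(F)$ if $\preceq$ orders the stick of $F$ lexicographically, and a final segment of $\mathrm{stick}(F)$ if $\preceq$ orders it anti-lexicographically. Then $\mathbf{T}(\preceq)$ is a Condorcet super-domain which is maximal by inclusion: for every tiling $T\notin\mathbf{T}(\preceq)$, the set $\mathbf{T}(\preceq)\cup\{T\}$ is not a Condorcet super-domain.
   Context: Fix an integer $n\ge 3$ and write $[n]=\{1,\dots,n\}$. Let $\Lambda$ be the set of 3-element subsets of $[n]$; a triple $\{i,j,k\}$ with $i<j<k$ is written $ijk$. For a 4-element subset $F=\{i<j<k<l\}$ of $[n]$, the stick of $F$, $\mathrm{stick}(F)$, is the sequence $(ijk,\ ijl,\ ikl,\ jkl)$ (the lexicographic order on these four triples); the reverse sequence is the anti-lexicographic order. A tiling (the inversion set of a rhombus tiling of the zonogon $Z(n;2)$) is a subset $T\subseteq\Lambda$ such that for every 4-element $F\subseteq[n]$, $T\cap\mathrm{stick}(F)$ is an initial segment or a final segment of $\mathrm{stick}(F)$ (empty set and whole stick allowed). Let $\mathbf T$ be the set of tilings. For a finite set $V$ of odd cardinality and tilings $(T_v)_{v\in V}$, $sm((T_v)_{v\in V})$ is the set of triples lying in $T_v$ for more than $|V|/2$ indices $v$. A subset $\mathbf D\subseteq\mathbf T$ is a Condorcet super-domain if for every finite $V$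 of odd cardinality and every family $(T_v)_{v\in V}$ with all $T_v\in\mathbf D$, $sm((T_v)_{v\in V})$ is a tiling. A partial order $\preceq$ on $\Lambda$ is admissible if for every 4-element $F\subseteq[n]$ its restriction to the four triples of $\mathrm{stick}(F)$ is the lexicographic linear order or the anti-lexicographic linear order. *)

(* [n] = {1..n} is modelled by 'I_n = {0..n-1} (order-preserving shift). *)
From mathcomp Require Import all_boot all_order.
Set Implicit Arguments. Unset Strict Implicit. Unset Printing Implicit Defensive.

Section Tilings.
Variable n : nat.

Definition is_triple (t : {set 'I_n}) : bool := #|t| == 3.

(* stick F = (F\{l}, F\{k}, F\{j}, F\{i}) for F = {i<j<k<l}, i.e. (ijk, ijl, ikl, jkl) *)
Definition ord_le (x y : 'I_n) : bool := (x <= y)%N.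
Definition stick (F : {set 'I_n}) : seq {set 'I_n} :=
  [seq F :\ x | x <- rev (sort ord_le (enum F))].

Definition stick_at (F : {set 'I_n}) (i : nat) : {set 'I_n} := nth set0 (stick F) i.

Definition initial_seg (T : {set {set 'I_n}}) (F : {set 'I_n}) : Prop :=
  exists m, (m <= 4)%N /\ forall i, (i < 4)%N -> (stick_at F i \in T) = (i < m)%N.
Definition final_seg (T : {set {set 'I_n}}) (F : {set 'I_n}) : Prop :=
  exists m, (m <= 4)%N /\ forall i, (i < 4)%N -> (stick_at F i \in T) = (m <= i)%N.

Definition tiling (T : {set {set 'I_n}}) : Prop :=
  (forall t, t \in T -> is_triple t) /\
  forall F : {set 'I_n}, #|F| = 4 -> initial_seg T F \/ final_seg T F.

Definition sm (V : finType) (f : V -> {set {set 'I_n}}) : {set {set 'I_n}} :=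
  [set t | is_triple t & (#|V| < 2 * #|[set v | t \in f v]|)%N].

Definition condorcet_super_domain (D : {set {set 'I_n}} -> Prop) : Prop :=
  (forall T, D T -> tiling T) /\
  forall (V : finType) (f : V -> {set {set 'I_n}}),
    odd #|V| -> (forall v, D (f v)) -> tiling (sm f).

Definition partial_order_on_Lambda (r : rel {set 'I_n}) : Prop :=
  (forall a, is_triple a -> r a a) /\
  (forall a b, is_triple a -> is_triple b -> r a b -> r b a -> a = b) /\
  (forall a b c, is_triple a -> is_triple b -> is_triple c -> r a b -> r b c -> r a c).

Definition lex_on_stick (r : rel {set 'I_n}) (F : {set 'I_n}) : Prop :=
  forall i j, (i < 4)%N -> (j < 4)%N -> r (stick_at F i) (stick_at F j) = (i <= j)%N.
Definition antilex_on_stick (r : rel {set 'I_n}) (F : {set 'I_n}) : Prop :=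
  forall i j, (i < 4)%N -> (j < 4)%N -> r (stick_at F i) (stick_at F j) = (j <= i)%N.

Definition admissible (r : rel {set 'I_n}) : Prop :=
  partial_order_on_Lambda r /\
  forall F : {set 'I_n}, #|F| = 4 -> lex_on_stick r F \/ antilex_on_stick r F.

Definition T_of (r : rel {set 'I_n}) (T : {set {set 'I_n}}) : Prop :=
  tiling T /\
  forall F : {set 'I_n}, #|F| = 4 ->
    (lex_on_stick r F -> initial_seg T F) /\ (antilex_on_stick r F -> final_seg T F).

End Tilings.

From mathcomp Require Import all_boot all_order.
From Stdlib Require Import Classical.

(* On each stick the four triples are ordered by position 0..3; a tiling of
   T(≼) meets a lexicographically ordered stick in an initial segment, i.e. a
   set of positions closed under "i+1 in => i in", and an antilexicographically
   ordered one in a final segment.  A strict majority preserves every implication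
   "t in => s in" that holds for all voters, so majorities of T(≼) stay in T(≼).
   For maximality, a tiling T outside T(≼) meets some lexicographic stick in a
   proper final segment (or an antilexicographic one in a proper initial
   segment).  The empty set and the principal down-sets {t | t ≼ s} lie in T(≼)
   and realise every initial segment of a lexicographic stick, and the majority
   of T with two of them can be made neither initial nor final: for instance
   positions {1,2,3}, {} and {0,1,2} vote for {1,2}. *)

Set Implicit Arguments.
Unset Strict Implicit.
Unset Printing Implicit Defensive.

Definition decreasing4 (p : nat -> bool) : bool :=
  all (fun i => p i.+1 ==> p i) (iota 0 3).
Definition increasing4 (p : nat -> bool) : bool :=
  all (fun i => p i ==> p i.+1) (iota 0 3).
Definition segment4 (p : nat -> bool) : bool := decreasing4 p || increasing4 p.

Definition maj3 (p q s : nat -> bool) (i : nat) : bool := (2 <= p i + q i + s i)%N.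

Lemma decreasing4P (p : nat -> bool) :
  reflect (forall i, (i < 3)%N -> p i.+1 -> p i) (decreasing4 p).
Proof.
apply: (iffP allP) => [dec_p i lt_i3 | dec_p i]; last by rewrite mem_iota => /dec_p/implyP.
by apply/implyP/dec_p; rewrite mem_iota.
Qed.

Lemma increasing4P (p : nat -> bool) :
  reflect (forall i, (i < 3)%N -> p i -> p i.+1) (increasing4 p).
Proof.
apply: (iffP allP) => [inc_p i lt_i3 | inc_p i]; last by rewrite mem_iota => /inc_p/implyP.
by apply/implyP/inc_p; rewrite mem_iota.
Qed.

Lemma eq_segment4 (p q : nat -> bool) :
  (forall i, (i < 4)%N -> p i = q i) -> segment4 p = segment4 q.
Proof. by move=> pq; rewrite /segment4 /decreasing4 /increasing4 /= !pq. Qed.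

Lemma initial_patternP (p : nat -> bool) :
  reflect (exists m, (m <= 4)%N /\ forall i, (i < 4)%N -> p i = (i < m)%N)
          (decreasing4 p).
Proof.
apply: (iffP idP) => [dec_p | [m [_ pm]]].
  exists (p 0 + p 1 + p 2 + p 3)%N; split=> [|[|[|[|[|i]]]]] //; move: dec_p;
  by rewrite /decreasing4 /=; case: (p 0); case: (p 1); case: (p 2); case: (p 3).
by rewrite /decreasing4 /= !pm //; case: m {pm} => [|[|[|[|m]]]].
Qed.

Lemma final_patternP (p : nat -> bool) :
  reflect (exists m, (m <= 4)%N /\ forall i, (i < 4)%N -> p i = (m <= i)%N)
          (increasing4 p).
Proof.
apply: (iffP idP) => [inc_p | [m [_ pm]]].
  exists (4 - (p 0 + p 1 + p 2 + p 3))%N; split=> [|[|[|[|[|i]]]]] //; move: inc_p;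
  by rewrite /increasing4 /=; case: (p 0); case: (p 1); case: (p 2); case: (p 3).
by rewrite /increasing4 /= !pm //; case: m {pm} => [|[|[|[|m]]]].
Qed.

Lemma maj3_final_initial m : (0 < m < 4)%N ->
  exists a b, [/\ (a <= 4)%N, (b <= 4)%N &
    ~~ segment4 (maj3 (fun i => m <= i) (fun i => i < a) (fun i => i < b))]%N.
Proof. by case: m => [|[|[|[|m]]]] // _; [exists 0, 3 | exists 1, 4 | exists 1, 4]. Qed.

Lemma maj3_initial_final m : (0 < m < 4)%N ->
  exists a b, [/\ (a <= 4)%N, (b <= 4)%N &
    ~~ segment4 (maj3 (fun i => i < m) (fun i => a <= i) (fun i => b <= i))]%N.
Proof. by case: m => [|[|[|[|m]]]] // _; [exists 3, 0 | exists 3, 0 | exists 4, 1]. Qed.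

Section Sticks.
Variable n : nat.
Implicit Types (F s t : {set 'I_n}) (X T A B : {set {set 'I_n}}).

Lemma initial_segP X F :
  reflect (initial_seg X F) (decreasing4 (fun i => stick_at F i \in X)).
Proof. exact: initial_patternP. Qed.

Lemma final_segP X F :
  reflect (final_seg X F) (increasing4 (fun i => stick_at F i \in X)).
Proof. exact: final_patternP. Qed.

Lemma final_not_initial X F : final_seg X F -> ~ initial_seg X F ->
  exists2 m, (0 < m < 4)%N & forall i, (i < 4)%N -> (stick_at F i \in X) = (m <= i)%N.
Proof.
move=> [m [le_m4 Xm]] not_init; exists m => //; apply/andP; split.
  rewrite lt0n; apply/eqP => m0; apply: not_init.
  by exists 4; split=> // i lt_i4; rewrite Xm // m0.
rewrite ltn_neqAle le_m4 andbT; apply/eqP => m4; apply: not_init.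
by exists 0; split=> // i lt_i4; rewrite Xm // m4 leqNgt lt_i4.
Qed.

Lemma initial_not_final X F : initial_seg X F -> ~ final_seg X F ->
  exists2 m, (0 < m < 4)%N & forall i, (i < 4)%N -> (stick_at F i \in X) = (i < m)%N.
Proof.
move=> [m [le_m4 Xm]] not_fin; exists m => //; apply/andP; split.
  rewrite lt0n; apply/eqP => m0; apply: not_fin.
  by exists 4; split=> // i lt_i4; rewrite Xm // m0 ltn0 leqNgt lt_i4.
rewrite ltn_neqAle le_m4 andbT; apply/eqP => m4; apply: not_fin.
by exists 0; split=> // i lt_i4; rewrite Xm // m4.
Qed.

Lemma stick_triple F i : #|F| = 4 -> (i < 4)%N -> is_triple (stick_at F i).
Proof.
move=> card_F lt_i4.
have size_stick : size (stick F) = 4 by rewrite size_map size_rev size_sort -cardE.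
apply: (all_nthP set0 _ i); last by rewrite size_stick.
rewrite all_map; apply/allP => x; rewrite mem_rev mem_sort mem_enum => Fx /=.
by move: card_F; rewrite /is_triple (cardsD1 x F) Fx add1n => -[->].
Qed.

Lemma sm_mono (V : finType) (f : V -> {set {set 'I_n}}) s t :
  is_triple s -> (forall v, t \in f v -> s \in f v) -> t \in sm f -> s \in sm f.
Proof.
rewrite !inE => -> ts /andP[_ maj_t]; rewrite (leq_trans maj_t) // leq_mul2l.
by apply/orP; right; apply/subset_leq_card/subsetP => v; rewrite !inE => /ts.
Qed.

Definition sm3 T A B : {set {set 'I_n}} := sm (tnth [tuple T; A; B]).

Lemma in_sm3 T A B t : is_triple t ->
  (t \in sm3 T A B) = (2 <= (t \in T) + (t \in A) + (t \in B))%N.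
Proof.
rewrite inE => ->; rewrite card_ord -sum1_card big_mkcond !big_ord_recl big_ord0.
by rewrite !inE !(tnth_nth T) /=; case: (t \in T); case: (t \in A); case: (t \in B).
Qed.

Lemma sm3_not_tiling F T A B (p q s : nat -> bool) : #|F| = 4 ->
  (forall i, (i < 4)%N -> (stick_at F i \in T) = p i) ->
  (forall i, (i < 4)%N -> (stick_at F i \in A) = q i) ->
  (forall i, (i < 4)%N -> (stick_at F i \in B) = s i) ->
  ~~ segment4 (maj3 p q s) -> ~ tiling (sm3 T A B).
Proof.
move=> card_F Tp Aq Bs /negP not_seg [_ /(_ F card_F) seg]; apply: not_seg.
rewrite -(@eq_segment4 (fun i => stick_at F i \in sm3 T A B)) => [|i lt_i4].
  by rewrite /segment4; case: seg => [/initial_segP | /final_segP] ->; rewrite ?orbT.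
by rewrite in_sm3 ?stick_triple // Tp ?Aq ?Bs.
Qed.

Section Admissible.
Variable r : rel {set 'I_n}.
Hypothesis adm : admissible r.

Lemma T_of_downset X : (forall t, t \in X -> is_triple t) ->
  (forall s t, t \in X -> is_triple s -> r s t -> s \in X) -> T_of r X.
Proof.
move=> X_triple X_down.
have lex_init F : #|F| = 4 -> lex_on_stick r F -> initial_seg X F.
  move=> card_F lex; apply/initial_segP/decreasing4P => i lt_i3 /(X_down (stick_at F i)); apply.
    exact: stick_triple card_F (leqW lt_i3).
  by rewrite lex ?leqnSn // leqW.
have antilex_fin F : #|F| = 4 -> antilex_on_stick r F -> final_seg X F.
  move=> card_F antilex; apply/final_segP/increasing4P => i lt_i3 /(X_down (stick_at F i.+1)); apply.
    exact: stick_triple card_F _.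
  by rewrite antilex ?leqnSn // leqW.
split; last by move=> F card_F; split; [exact: lex_init | exact: antilex_fin].
split=> // F card_F.
by case: (adm.2 F card_F) => [/(lex_init F card_F) | /(antilex_fin F card_F)]; [left | right].
Qed.

Lemma T_of_set0 : T_of r set0.
Proof. by apply: T_of_downset => [t | s t]; rewrite inE. Qed.

Lemma T_of_principal s : is_triple s -> T_of r [set t | is_triple t && r t s].
Proof.
have [_ [_ r_trans]] := adm.1.
move=> s_triple; apply: T_of_downset => [t | t u]; rewrite !inE => /andP[] // u_triple r_us t_triple r_tu.
by rewrite t_triple (r_trans t u s).
Qed.

Lemma initial_seg_realized F a : #|F| = 4 -> lex_on_stick r F -> (a <= 4)%N ->
  exists2 A, T_of r A & forall i, (i < 4)%N -> (stick_at F i \in A) = (i < a)%N.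
Proof.
move=> card_F lex; case: a => [_ | k lt_k4].
  by exists set0 => [|i _]; [exact: T_of_set0 | rewrite inE].
exists [set t | is_triple t && r t (stick_at F k)] => [|i lt_i4].
  exact/T_of_principal/stick_triple.
by rewrite inE stick_triple // lex.
Qed.

Lemma final_seg_realized F a : #|F| = 4 -> antilex_on_stick r F -> (a <= 4)%N ->
  exists2 A, T_of r A & forall i, (i < 4)%N -> (stick_at F i \in A) = (a <= i)%N.
Proof.
move=> card_F antilex; rewrite leq_eqVlt => /predU1P[-> | lt_a4].
  by exists set0 => [|i lt_i4]; [exact: T_of_set0 | rewrite inE leqNgt lt_i4].
exists [set t | is_triple t && r t (stick_at F a)] => [|i lt_i4].
  exact/T_of_principal/stick_triple.
by rewrite inE stick_triple // antilex.
Qed.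

Lemma T_of_condorcet : condorcet_super_domain (T_of r).
Proof.
split=> [T [] // | V f _ f_in]; split=> [t | F card_F]; first by rewrite inE => /andP[].
case: (adm.2 F card_F) => [lex | antilex]; [left | right].
- apply/initial_segP/decreasing4P => i lt_i3; apply: sm_mono => [|v].
    exact: stick_triple card_F (leqW lt_i3).
  by move/initial_segP/decreasing4P: (((f_in v).2 F card_F).1 lex); apply.
- apply/final_segP/increasing4P => i lt_i3; apply: sm_mono => [|v].
    exact: stick_triple card_F _.
  by move/final_segP/increasing4P: (((f_in v).2 F card_F).2 antilex); apply.
Qed.

Lemma T_of_maximal T : tiling T -> ~ T_of r T ->
  exists A B, [/\ T_of r A, T_of r B & ~ tiling (sm3 T A B)].
Proof.
move=> T_til not_T.
have [F not_F] : exists F : {set 'I_n}, ~ (#|F| = 4 ->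
    (lex_on_stick r F -> initial_seg T F) /\ (antilex_on_stick r F -> final_seg T F)).
  by apply: not_all_ex_not => all_F; apply: not_T.
have [card_F /not_and_or[not_lex_init | not_antilex_fin]] := imply_to_and _ _ not_F.
- have [lex not_init] := imply_to_and _ _ not_lex_init.
  have [m m_range Tm] : exists2 m, (0 < m < 4)%N &
      forall i, (i < 4)%N -> (stick_at F i \in T) = (m <= i)%N.
    by apply: final_not_initial not_init; case: (T_til.2 F card_F) => // /not_init.
  have [a [b [le_a4 le_b4 not_seg]]] := maj3_final_initial m_range.
  have [A TA Aa] := initial_seg_realized card_F lex le_a4.
  have [B TB Bb] := initial_seg_realized card_F lex le_b4.
  by exists A, B; split=> //; apply: sm3_not_tiling card_F Tm Aa Bb not_seg.
- have [antilex not_fin] := imply_to_and _ _ not_antilex_fin.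
  have [m m_range Tm] : exists2 m, (0 < m < 4)%N &
      forall i, (i < 4)%N -> (stick_at F i \in T) = (i < m)%N.
    by apply: initial_not_final not_fin; case: (T_til.2 F card_F) => // /not_fin.
  have [a [b [le_a4 le_b4 not_seg]]] := maj3_initial_final m_range.
  have [A TA Aa] := final_seg_realized card_F antilex le_a4.
  have [B TB Bb] := final_seg_realized card_F antilex le_b4.
  by exists A, B; split=> //; apply: sm3_not_tiling card_F Tm Aa Bb not_seg.
Qed.

End Admissible.
End Sticks.

Theorem theorem2 (n : nat) (r : rel {set 'I_n}) :
  (3 <= n)%N -> admissible r ->
  condorcet_super_domain (T_of r) /\
  (forall T : {set {set 'I_n}}, tiling T -> ~ T_of r T ->
     ~ condorcet_super_domain (fun X => T_of r X \/ X = T)).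
Proof.
move=> _ adm; split; first exact: T_of_condorcet.
move=> T T_til not_T [_ csd].
have [A [B [TA TB not_til]]] := T_of_maximal adm T_til not_T.
apply/not_til/csd => [|v]; first by rewrite card_ord.
by rewrite (tnth_nth T); case: v => -[|[|[|]]] //= _; [right | left | left].
Qed.
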